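(* Let $\alpha_1,\alpha_2,\alpha_3:\mathbb N\to[0,\infty)$ be non-negative, bounded and increasing functions with $\alpha_1(0)=\alpha_2(0)=\alpha_3(0)=0$ and $\lim_{c\to\infty}(\alpha_1(c)+\alpha_2(c))<1$, and let $\lambda>0$. Consider the equation $w(c)=\min\{\alpha_1(c)w(c+1)+\alpha_2(c)w(c-1)+\alpha_3(c);\ \lambda\},\qquad c\in\mathbb N,\qquad(\ast)$ where the term $\alpha_2(0)w(-1)$ is taken to be $0$. Then: (a) equation $(\ast)$ has exactly one bounded solution $w:\mathbb N\to\mathbb R$; (b) let $\zeta_j=\lim_{c\to\infty}\alpha_j(c)$ for $j=1,2,3$ and $\lambda^*=\frac{\zeta_3}{1-\zeta_1-\zeta_2}$. If $\lambda<\lambda^*$, then there is $c^*\in\mathbb N$, $c^*\ge1$, such that the first term $\alpha_1(c)w(c+1)+\alpha_2(c)w(c-1)+\alpha_3(c)$ in the minimum in $(\ast)$ (with $w$ the bounded solution) is strictly bigger than $\lambda$ if and only if $c\ge c^*$. If $\lambda\ge\lambda^*$, then this first term is not bigger than $\lambda$, and hence equals $w(c)$, for all $c\in\mathbb N$. *)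

From Stdlib Require Import Reals Lra Lia.
Open Scope R_scope.

Definition first_term (a1 a2 a3 : nat -> R) (w : nat -> R) (c : nat) : R :=
  a1 c * w (S c) + (match c with O => 0 | S c' => a2 c * w c' end) + a3 c.

Definition solves (a1 a2 a3 : nat -> R) (lam : R) (w : nat -> R) : Prop :=
  forall c : nat, w c = Rmin (first_term a1 a2 a3 w c) lam.

Definition bounded_seq (w : nat -> R) : Prop :=
  exists M : R, forall c : nat, Rabs (w c) <= M.

Definition admissible_coef (a : nat -> R) : Prop :=
  (forall c, 0 <= a c) /\ bounded_seq a /\
  (forall c d : nat, (c <= d)%nat -> a c <= a d) /\ a O = 0.

(* The right-hand side w |-> min (first_term w, lam) is monotone, maps nonnegative
   nondecreasing sequences to nonnegative nondecreasing ones bounded by lam, and is a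
   contraction for the sup-distance with ratio z1 + z2 < 1 (since the coefficients
   increase to their limits). Value iteration from 0 therefore increases to a solution,
   which is the only bounded one; it is nondecreasing with a limit L <= lam.
   The first term of the solution is nondecreasing, vanishes at 0 and converges to
   (z1 + z2) L + z3. If it never exceeded lam it would coincide with the solution, forcing
   L = z3 / (1 - z1 - z2) > lam; if it exceeded lam somewhere, then
   lam < (z1 + z2) L + z3 <= (z1 + z2) lam + z3, i.e. lam < z3 / (1 - z1 - z2). *)
From Stdlib Require Import Reals Lra Lia Wf_nat Classical FunctionalExtensionality.
Open Scope R_scope.

Lemma Rabs_le_bounds x K : Rabs x <= K -> -K <= x <= K.
Proof. unfold Rabs; destruct (Rcase_abs x); lra. Qed.

Lemma Rmin_dist_le a b m : Rabs (Rmin a m - Rmin b m) <= Rabs (a - b).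
Proof.
  unfold Rmin; destruct (Rle_dec a m), (Rle_dec b m);
    unfold Rabs; repeat destruct Rcase_abs; lra.
Qed.

Lemma Un_cv_const a : Un_cv (fun _ => a) a.
Proof.
  intros e he; exists O; intros n _.
  unfold R_dist; rewrite Rminus_diag, Rabs_R0; exact he.
Qed.

Lemma Un_cv_S u l : Un_cv u l -> Un_cv (fun n => u (S n)) l.
Proof. intros H e he; destruct (H e he) as [N HN]; exists N; intros n hn; apply HN; lia. Qed.

Lemma Un_cv_Rmin u l m : Un_cv u l -> Un_cv (fun n => Rmin (u n) m) (Rmin l m).
Proof.
  intros H e he; destruct (H e he) as [N HN]; exists N; intros n hn.
  eapply Rle_lt_trans; [apply Rmin_dist_le | exact (HN n hn)].
Qed.

Lemma Un_cv_pow_0 q : Rabs q < 1 -> Un_cv (pow q) 0.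
Proof.
  intros Hq e he; destruct (pow_lt_1_zero q Hq e he) as [N HN]; exists N; intros n hn.
  unfold R_dist; rewrite Rminus_0_r; apply HN; lia.
Qed.

Lemma geometric_bound_eq0 x q M : 0 <= q < 1 -> (forall n, Rabs x <= q ^ n * M) -> x = 0.
Proof.
  intros Hq Hx.
  assert (Hlim : Un_cv (fun n => q ^ n * M) 0).
  { rewrite <- (Rmult_0_l M).
    apply CV_mult; [apply Un_cv_pow_0; rewrite Rabs_pos_eq; lra | apply Un_cv_const]. }
  pose proof (Rle_cv_lim Hx (Un_cv_const (Rabs x)) Hlim).
  pose proof (Rabs_pos x); destruct (Rabs_le_bounds x 0); lra.
Qed.

Lemma growing_threshold (u : nat -> R) (m : R) :
  Un_growing u -> u O <= m -> (exists c, u c > m) ->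
  exists cs, (1 <= cs)%nat /\ forall c, u c > m <-> (cs <= c)%nat.
Proof.
  intros Hu H0 Hex.
  destruct (dec_inh_nat_subset_has_unique_least_element (fun c => u c > m))
    as [cs [[Hcs Hmin] _]]; [intro n; destruct (Rlt_dec m (u n)); [left|right]; lra | exact Hex |].
  exists cs; split.
  - destruct cs; [lra | lia].
  - intro c; split; [apply Hmin|].
    intro Hc; pose proof (tech9 u Hu cs c Hc); lra.
Qed.

Lemma admissible_coef_growing a : admissible_coef a -> Un_growing a.
Proof. intros (_ & _ & Ha & _) c; apply Ha; lia. Qed.

Lemma admissible_coef_le_lim a z : admissible_coef a -> Un_cv a z -> forall c, 0 <= a c <= z.
Proof.
  intros Ha Hz c; split; [apply Ha|].
  exact (growing_ineq a z (admissible_coef_growing a Ha) Hz c).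
Qed.

Lemma first_term_0 a1 a2 a3 w : a1 O = 0 -> a3 O = 0 -> first_term a1 a2 a3 w O = 0.
Proof. intros H1 H3; unfold first_term; rewrite H1, H3; ring. Qed.

Lemma first_term_S_cv a1 a2 a3 w z1 z2 z3 L :
  Un_cv a1 z1 -> Un_cv a2 z2 -> Un_cv a3 z3 -> Un_cv w L ->
  Un_cv (fun c => first_term a1 a2 a3 w (S c)) ((z1 + z2) * L + z3).
Proof.
  intros H1 H2 H3 HL; rewrite Rmult_plus_distr_r.
  apply (CV_plus (fun c => a1 (S c) * w (S (S c)) + a2 (S c) * w c)); [|apply Un_cv_S, H3].
  apply (CV_plus (fun c => a1 (S c) * w (S (S c)))).
  - apply (CV_mult (fun c => a1 (S c))); [apply Un_cv_S, H1 | apply (Un_cv_S (fun c => w (S c))), Un_cv_S, HL].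
  - apply (CV_mult (fun c => a2 (S c))); [apply Un_cv_S, H2 | exact HL].
Qed.

Section Bellman.

Variables (a1 a2 a3 : nat -> R) (lam : R).
Hypotheses (a1_ge0 : forall c, 0 <= a1 c) (a2_ge0 : forall c, 0 <= a2 c)
  (a3_ge0 : forall c, 0 <= a3 c).
Hypotheses (a1_growing : Un_growing a1) (a2_growing : Un_growing a2)
  (a3_growing : Un_growing a3).
Hypothesis lam_gt0 : 0 < lam.

Local Notation F := (first_term a1 a2 a3).

Definition bellman (w : nat -> R) (c : nat) : R := Rmin (F w c) lam.

Fixpoint value_iter (n : nat) : nat -> R :=
  match n with O => fun _ => 0 | S n => bellman (value_iter n) end.

Lemma first_term_le_compat v w : (forall c, v c <= w c) -> forall c, F v c <= F w c.
Proof.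
  intros H c; unfold first_term; destruct c as [|c].
  - pose proof (Rmult_le_compat_l _ _ _ (a1_ge0 O) (H 1%nat)); lra.
  - pose proof (Rmult_le_compat_l _ _ _ (a1_ge0 (S c)) (H (S (S c)))).
    pose proof (Rmult_le_compat_l _ _ _ (a2_ge0 (S c)) (H c)); lra.
Qed.

Lemma first_term_ge0 w : (forall c, 0 <= w c) -> forall c, 0 <= F w c.
Proof.
  intros H c; unfold first_term; destruct c as [|c].
  - pose proof (Rmult_le_pos _ _ (a1_ge0 O) (H 1%nat)); pose proof (a3_ge0 O); lra.
  - pose proof (Rmult_le_pos _ _ (a1_ge0 (S c)) (H (S (S c)))).
    pose proof (Rmult_le_pos _ _ (a2_ge0 (S c)) (H c)); pose proof (a3_ge0 (S c)); lra.
Qed.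

Lemma first_term_growing w : (forall c, 0 <= w c) -> Un_growing w -> Un_growing (F w).
Proof.
  intros H0 Hw c; unfold first_term; destruct c as [|c].
  - pose proof (Rmult_le_compat _ _ _ _ (a1_ge0 O) (H0 1%nat) (a1_growing O) (Hw 1%nat)).
    pose proof (Rmult_le_pos _ _ (a2_ge0 1%nat) (H0 O)); pose proof (a3_growing O); lra.
  - pose proof (Rmult_le_compat _ _ _ _ (a1_ge0 (S c)) (H0 (S (S c))) (a1_growing (S c)) (Hw (S (S c)))).
    pose proof (Rmult_le_compat _ _ _ _ (a2_ge0 (S c)) (H0 c) (a2_growing (S c)) (Hw c)).
    pose proof (a3_growing (S c)); lra.
Qed.

Lemma first_term_cv (u : nat -> nat -> R) w :
  (forall c, Un_cv (fun n => u n c) (w c)) -> forall c, Un_cv (fun n => F (u n) c) (F w c).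
Proof.
  intros H c; unfold first_term; destruct c as [|c].
  - apply (CV_plus (fun n => a1 O * u n 1%nat + 0)); [|apply Un_cv_const].
    apply (CV_plus (fun n => a1 O * u n 1%nat)); [|apply Un_cv_const].
    apply CV_mult; [apply Un_cv_const | apply H].
  - apply (CV_plus (fun n => a1 (S c) * u n (S (S c)) + a2 (S c) * u n c)); [|apply Un_cv_const].
    apply (CV_plus (fun n => a1 (S c) * u n (S (S c))));
      (apply CV_mult; [apply Un_cv_const | apply H]).
Qed.

Lemma first_term_dist q K v w : (forall c, a1 c + a2 c <= q) ->
  (forall c, Rabs (v c - w c) <= K) -> forall c, Rabs (F v c - F w c) <= q * K.
Proof.
  intros Hq HK c; apply Rabs_le; unfold first_term; destruct c as [|c].
  - pose proof (Rabs_le_bounds _ _ (HK 1%nat)); pose proof (Hq O).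
    pose proof (a1_ge0 O); pose proof (a2_ge0 O); nra.
  - pose proof (Rabs_le_bounds _ _ (HK (S (S c)))); pose proof (Rabs_le_bounds _ _ (HK c)).
    pose proof (Hq (S c)); pose proof (a1_ge0 (S c)); pose proof (a2_ge0 (S c)); nra.
Qed.

Lemma bellman_le_compat v w : (forall c, v c <= w c) -> forall c, bellman v c <= bellman w c.
Proof. intros H c; apply Rle_min_compat_r, first_term_le_compat, H. Qed.

Lemma bellman_range w : (forall c, 0 <= w c) -> forall c, 0 <= bellman w c <= lam.
Proof.
  intros H c; split; [apply Rmin_glb; [apply first_term_ge0, H | lra] | apply Rmin_r].
Qed.

Lemma bellman_growing w : (forall c, 0 <= w c) -> Un_growing w -> Un_growing (bellman w).
Proof. intros H0 Hw c; apply Rle_min_compat_r, first_term_growing; assumption. Qed.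

Lemma value_iter_range n c : 0 <= value_iter n c <= lam.
Proof.
  revert c; induction n as [|n IH]; intro c; [simpl; lra|].
  apply bellman_range; intro; apply IH.
Qed.

Lemma value_iter_incr n c : value_iter n c <= value_iter (S n) c.
Proof.
  revert c; induction n as [|n IH]; intro c; [apply value_iter_range|].
  apply bellman_le_compat, IH.
Qed.

Lemma value_iter_growing n : Un_growing (value_iter n).
Proof.
  induction n as [|n IH]; [intro; simpl; lra|].
  apply bellman_growing; [intro; apply value_iter_range | exact IH].
Qed.

Lemma bellman_solution_exists :
  exists w, solves a1 a2 a3 lam w /\ (forall c, 0 <= w c <= lam) /\ Un_growing w.
Proof.
  assert (Hcv : forall c, {l | Un_cv (fun n => value_iter n c) l}).
  { intro c; apply growing_cv; [intro n; apply value_iter_incr|].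
    exists lam; intros x [n ->]; apply value_iter_range. }
  set (w := fun c => proj1_sig (Hcv c)).
  assert (Hw : forall c, Un_cv (fun n => value_iter n c) (w c))
    by (intro c; exact (proj2_sig (Hcv c))).
  exists w; split; [|split].
  - intro c; apply (UL_sequence (fun n => value_iter (S n) c)).
    + exact (Un_cv_S _ _ (Hw c)).
    + apply (Un_cv_Rmin (fun n => F (value_iter n) c)), first_term_cv, Hw.
  - intro c; split.
    + refine (Rle_cv_lim _ (Un_cv_const 0) (Hw c)); intro n; apply value_iter_range.
    + refine (Rle_cv_lim _ (Hw c) (Un_cv_const lam)); intro n; apply value_iter_range.
  - intro c; refine (Rle_cv_lim _ (Hw c) (Hw (S c))); intro n; apply value_iter_growing.
Qed.

Lemma bellman_contraction q K v w : (forall c, a1 c + a2 c <= q) ->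
  (forall c, Rabs (v c - w c) <= K) -> forall c, Rabs (bellman v c - bellman w c) <= q * K.
Proof.
  intros Hq HK c; eapply Rle_trans; [apply Rmin_dist_le | exact (first_term_dist q K v w Hq HK c)].
Qed.

Lemma solves_unique q v w : (forall c, a1 c + a2 c <= q) -> 0 <= q < 1 ->
  bounded_seq v -> bounded_seq w -> solves a1 a2 a3 lam v -> solves a1 a2 a3 lam w -> v = w.
Proof.
  intros Hq Hq1 [Mv Hv] [Mw Hw] Sv Sw.
  assert (Hn : forall n c, Rabs (v c - w c) <= q ^ n * (Mv + Mw)).
  { induction n as [|n IH]; intro c.
    - rewrite pow_O, Rmult_1_l; unfold Rminus.
      eapply Rle_trans; [apply Rabs_triang|]; rewrite Rabs_Ropp.
      pose proof (Hv c); pose proof (Hw c); lra.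
    - rewrite (Sv c), (Sw c); simpl; rewrite Rmult_assoc.
      exact (bellman_contraction q _ v w Hq IH c). }
  apply functional_extensionality; intro c.
  apply Rminus_diag_uniq, (geometric_bound_eq0 _ q (Mv + Mw) Hq1), (fun n => Hn n c).
Qed.

End Bellman.

Section Switching.

Variables (a1 a2 a3 w : nat -> R) (z1 z2 z3 lam L : R).
Hypotheses (z1_ge0 : 0 <= z1) (z2_ge0 : 0 <= z2) (z12_lt1 : z1 + z2 < 1).
Hypothesis w_solves : solves a1 a2 a3 lam w.
Hypothesis w_le_lam : forall c, w c <= lam.
Hypothesis w_cv : Un_cv w L.
Hypothesis first_term_S_cv_w :
  Un_cv (fun c => first_term a1 a2 a3 w (S c)) ((z1 + z2) * L + z3).
Hypothesis first_term_growing_w : Un_growing (first_term a1 a2 a3 w).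

Local Notation F := (first_term a1 a2 a3 w).

Let L_le_lam : L <= lam.
Proof. exact (Rle_cv_lim w_le_lam w_cv (Un_cv_const lam)). Qed.

Lemma first_term_le_lam_of_ge : z3 / (1 - z1 - z2) <= lam -> forall c, F c <= lam.
Proof.
  intros Hge c.
  assert (Hx : z3 / (1 - z1 - z2) * (1 - z1 - z2) = z3) by (field; lra).
  pose proof (first_term_growing_w c).
  pose proof (growing_ineq _ _ (fun c => first_term_growing_w (S c)) first_term_S_cv_w c).
  pose proof (Rmult_le_compat_l _ _ _ (Rplus_le_le_0_compat _ _ z1_ge0 z2_ge0) L_le_lam).
  pose proof (Rmult_le_compat_r (1 - z1 - z2) _ _ ltac:(lra) Hge); lra.
Qed.

Lemma first_term_gt_lam_of_lt : lam < z3 / (1 - z1 - z2) -> exists c, F c > lam.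
Proof.
  intros Hlt; apply not_all_not_ex; intro Hle.
  assert (HwF : (fun c => w (S c)) = (fun c => F (S c))).
  { apply functional_extensionality; intro c.
    rewrite (w_solves (S c)); apply Rmin_left, Rnot_lt_le, Hle. }
  assert (HL : L = (z1 + z2) * L + z3).
  { apply (UL_sequence (fun c => w (S c))); [apply Un_cv_S, w_cv | rewrite HwF; exact first_term_S_cv_w]. }
  assert (Hx : z3 / (1 - z1 - z2) * (1 - z1 - z2) = z3) by (field; lra).
  pose proof (Rmult_lt_compat_r (1 - z1 - z2) _ _ ltac:(lra) Hlt).
  pose proof (Rmult_le_compat_r (1 - z1 - z2) _ _ ltac:(lra) L_le_lam); lra.
Qed.

End Switching.

Theorem lemma5p2 (a1 a2 a3 : nat -> R) (z1 z2 z3 lam : R)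
  (h1 : admissible_coef a1) (h2 : admissible_coef a2) (h3 : admissible_coef a3)
  (hz1 : Un_cv a1 z1) (hz2 : Un_cv a2 z2) (hz3 : Un_cv a3 z3)
  (hlim : z1 + z2 < 1) (hlam : 0 < lam) :
  (exists w : nat -> R, bounded_seq w /\ solves a1 a2 a3 lam w /\
     forall v : nat -> R, bounded_seq v -> solves a1 a2 a3 lam v -> v = w)
  /\
  (forall w : nat -> R, bounded_seq w -> solves a1 a2 a3 lam w ->
     (lam < z3 / (1 - z1 - z2) ->
        exists cs : nat, (1 <= cs)%nat /\
          forall c : nat, first_term a1 a2 a3 w c > lam <-> (cs <= c)%nat)
     /\
     (z3 / (1 - z1 - z2) <= lam ->
        forall c : nat, first_term a1 a2 a3 w c <= lam /\
                        w c = first_term a1 a2 a3 w c)).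
Proof.
  assert (z12_ge0 : 0 <= z1 /\ 0 <= z2).
  { pose proof (admissible_coef_le_lim a1 z1 h1 hz1 O);
      pose proof (admissible_coef_le_lim a2 z2 h2 hz2 O); lra. }
  assert (a_ge0 : forall a, admissible_coef a -> forall c, 0 <= a c) by (intros a Ha; apply Ha).
  assert (Hq : forall c, a1 c + a2 c <= z1 + z2).
  { intro c; pose proof (admissible_coef_le_lim a1 z1 h1 hz1 c);
      pose proof (admissible_coef_le_lim a2 z2 h2 hz2 c); lra. }
  pose proof (admissible_coef_growing a1 h1); pose proof (admissible_coef_growing a2 h2);
    pose proof (admissible_coef_growing a3 h3).
  destruct (bellman_solution_exists a1 a2 a3 lam (a_ge0 a1 h1) (a_ge0 a2 h2) (a_ge0 a3 h3))
    as (w0 & Hs0 & Hr0 & Hg0); try assumption.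
  assert (Hb0 : bounded_seq w0) by (exists lam; intro c; apply Rabs_le; pose proof (Hr0 c); lra).
  assert (Huniq : forall v, bounded_seq v -> solves a1 a2 a3 lam v -> v = w0).
  { intros v Hv Hsv; apply (solves_unique a1 a2 a3 lam (a_ge0 a1 h1) (a_ge0 a2 h2) (z1 + z2));
      try assumption; lra. }
  split; [exists w0; auto|].
  intros w Hb Hs; rewrite (Huniq w Hb Hs).
  destruct (growing_cv w0 Hg0) as [L HL]; [exists lam; intros x [n ->]; apply Hr0|].
  assert (HF : Un_growing (first_term a1 a2 a3 w0))
    by (apply first_term_growing; auto; intro c; apply Hr0).
  pose proof (first_term_S_cv a1 a2 a3 w0 z1 z2 z3 L hz1 hz2 hz3 HL).
  assert (w0_le : forall c, w0 c <= lam) by (intro c; apply Hr0).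
  split.
  - intro Hlt; apply growing_threshold; [exact HF | | eapply first_term_gt_lam_of_lt; eauto].
    rewrite first_term_0; [lra | apply h1 | apply h3].
  - intros Hge c; assert (Hc : first_term a1 a2 a3 w0 c <= lam)
      by (apply (first_term_le_lam_of_ge a1 a2 a3 w0 z1 z2 z3 lam L); try apply z12_ge0; assumption).
    split; [exact Hc | rewrite (Hs0 c) at 1; apply Rmin_left, Hc].
Qed.
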